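(* Let $p$ be an odd prime, $i\in\mathbb{N}_0$ and $\gamma\in\hat H_i$. Let $\tilde\gamma$ be the unique $\mathbb{Q}_p$-linear extension of $\gamma$ to $K\wedge_{\mathbb{Q}_p}K\to K$. Then for every $j\in\mathbb{N}_0$ with $j\equiv i\pmod{p-1}$, the restriction of $\tilde\gamma$ to $\mathfrak{p}^j\wedge\mathfrak{p}^j$ lies in $\hat H_j$.
   Context: Let $\theta$ be a primitive $p$-th root of unity, $K=\mathbb{Q}_p(\theta)$, $\mathcal{O}$ its ring of integers, $\mathfrak{p}$ its maximal ideal; $\mathfrak{p}^j$ is the unique ideal of index $p^j$ in $\mathcal{O}$. $P=\langle\theta\rangle$ acts by multiplication on ideals and diagonally on exterior squares $\mathfrak{p}^i\wedge\mathfrak{p}^i$ (over $\mathbb{Z}_p$); $\mathrm{Hom}_P$ denotes $P$-equivariant $\mathbb{Z}_p$-linear maps. $\hat{H}_i=\{\gamma\in\mathrm{Hom}_P(\mathfrak{p}^i\wedge\mathfrak{p}^i,\mathfrak{p}^{2i+1}) \mid \gamma \text{ surjective}\}$. *)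

From HB Require Import structures.
From mathcomp Require Import all_boot all_order all_algebra all_field.
Set Implicit Arguments. Unset Strict Implicit. Unset Printing Implicit Defensive.
Import GRing.Theory.
Local Open Scope ring_scope.

(* The p-adic integers, characterised axiomatically inside a field F:       *)
(* Zp is a valuation ring of F (so F = Frac Zp), its maximal ideal is       *)
(* generated by p, the residue field is the prime field F_p, Zp is          *)
(* p-adically separated and complete.  These properties characterise        *)
(* (Zp, F) up to isomorphism as (Z_p, Q_p).                                 *)
Definition is_padic_integers (p : nat) (F : fieldType) (Zp : {pred F}) : Prop :=
  let pF : F := p%:R in
  [/\ 1 \in Zp,
      (forall x y, x \in Zp -> y \in Zp -> (x - y \in Zp) /\ (x * y \in Zp)),
      (forall x : F, x \in Zp \/ x^-1 \in Zp),
      pF \in Zp /\ pF^-1 \notin Zp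
    & (forall x, x \in Zp -> x^-1 \notin Zp -> x / pF \in Zp)] /\
  [/\ (forall x, x \in Zp -> exists k : nat, (x - k%:R) / pF \in Zp),
      (forall x, (forall n, x / pF ^+ n \in Zp) -> x = 0)
    & (forall a : nat -> F, (forall n, a n \in Zp) ->
         (forall n, (a n.+1 - a n) / pF ^+ n \in Zp) ->
         exists l, forall n, (l - a n) / pF ^+ n \in Zp)].

Section Defs.
Variables (F : fieldType) (Zp : {pred F}) (L : fieldExtType F) (theta : L).

Definition ring_of_integers (x : L) : Prop :=
  exists q : {poly F}, [/\ q \is monic, (forall k, q`_k \in Zp)
                        & root (map_poly (fun a : F => a%:A) q) x].

(* the maximal ideal of the local ring O : its non-units *)
Definition max_ideal (x : L) : Prop :=
  ring_of_integers x /\ ~ (exists y, ring_of_integers y /\ x * y = 1).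

Fixpoint ideal_pow (j : nat) : L -> Prop :=
  match j with
  | 0 => ring_of_integers
  | j'.+1 => fun x => exists s : seq (L * L),
       (forall ab, ab \in s -> max_ideal ab.1 /\ ideal_pow j' ab.2) /\
       x = \sum_(ab <- s) ab.1 * ab.2
  end.

(* F-bilinear alternating maps L x L -> L, i.e. F-linear maps L ∧_F L -> L *)
Definition alt_bilinear (g : L -> L -> L) : Prop :=
  [/\ (forall (a : F) x y z, g (a *: x + y) z = a *: g x z + g y z),
      (forall (a : F) x y z, g x (a *: y + z) = a *: g x y + g x z)
    & (forall x, g x x = 0)].

(* The restriction of g to 𝔭^j ∧ 𝔭^j lies in \hat H_j :
   it maps into 𝔭^(2j+1), is P = <theta>-equivariant, and is surjective
   onto 𝔭^(2j+1) (elements of 𝔭^j ∧ 𝔭^j are finite sums of x ∧ y). *)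
Definition restr_in_Hhat (j : nat) (g : L -> L -> L) : Prop :=
  [/\ (forall x y, ideal_pow j x -> ideal_pow j y -> ideal_pow (2 * j + 1) (g x y)),
      (forall (k : nat) x y, ideal_pow j x -> ideal_pow j y ->
          g (theta ^+ k * x) (theta ^+ k * y) = theta ^+ k * g x y)
    & (forall z, ideal_pow (2 * j + 1) z ->
          exists s : seq (L * L),
            (forall ab, ab \in s -> ideal_pow j ab.1 /\ ideal_pow j ab.2) /\
            z = \sum_(ab <- s) g ab.1 ab.2)].
End Defs.

From HB Require Import structures.
From mathcomp Require Import all_boot all_order all_algebra all_field.
From mathcomp Require Import ring.
From Stdlib Require Import Classical_Prop.
Set Implicit Arguments. Unset Strict Implicit. Unset Printing Implicit Defensive.
Import GRing.Theory.
Local Open Scope ring_scope.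

(* The ring of integers O of K is Zp[θ]: θ is an eigenvalue of a permutation matrix,
   so Zp[θ] ⊆ O; conversely p^N x ∈ Zp[θ] for x ∈ O, and the resulting factors of
   π = 1 - θ can be removed one at a time because an element of Zp[θ] not divisible
   by π is a unit.  Hence 𝔭 = π O and 𝔭^n = π^n O.  Since p = ∏_(0<k<p) (1 - θ^k) and
   each 1 - θ^k is π times a unit, p is π^(p-1) times a unit and 𝔭^(n+p-1) = p 𝔭^n.
   Scaling by p^-m thus maps 𝔭^(i+m(p-1)) onto 𝔭^i and, as
   γ(p^-m x, p^-m y) = p^-2m γ(x, y), maps 𝔭^(2(i+m(p-1))+1) onto 𝔭^(2i+1); so the
   three conditions defining Ĥ_i transfer between i and i + m(p-1). *)

Lemma subr1X (R : pzRingType) (x : R) n : 1 - x ^+ n = (1 - x) * \sum_(i < n) x ^+ i.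
Proof. by rewrite -opprB subrX1 -mulNr opprB. Qed.

Lemma monic_root_invE (R : comPzRingType) (b : nat -> R) d (x w : R) :
  \sum_(k < d) b k * x ^+ k + x ^+ d = 0 -> x * w = 1 ->
  x = - \sum_(k < d) b k * w ^+ (d.-1 - k).
Proof.
move=> root_x xw.
have sum_bw : \sum_(k < d) b k * x ^+ k * w ^+ d = - 1.
  have := congr1 (fun z => z * w ^+ d) root_x.
  rewrite mul0r mulrDl -exprMn xw expr1n mulr_suml => /eqP.
  by rewrite addr_eq0 => /eqP.
have xkwd k : (k < d)%N -> x ^+ k * w ^+ d = w * w ^+ (d.-1 - k).
  move=> lt_kd; rewrite -{1}(subnKC (ltnW lt_kd)) exprD mulrA -exprMn xw.
  by rewrite expr1n mul1r -exprS; case: d lt_kd {root_x sum_bw} => // d lt_kd; rewrite subSn.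
have -> : - \sum_(k < d) b k * w ^+ (d.-1 - k) = x * (- \sum_(k < d) b k * x ^+ k * w ^+ d).
  rewrite mulrN mulr_sumr; congr (- _); apply: eq_bigr => k _.
  by rewrite -mulrA xkwd // mulrCA (mulrA x) xw mul1r.
by rewrite sum_bw opprK mulr1.
Qed.

Lemma horner_algE (R : nzSemiRingType) (A : semiAlgType R) (a : A) (f : {poly R}) :
  horner_alg a f = \sum_(i < size f) f`_i *: a ^+ i.
Proof.
rewrite -[f in LHS]coefK poly_def rmorph_sum /=; apply: eq_bigr => i _.
by rewrite linearZ /= rmorphXn /= horner_algX mulr_algl.
Qed.

Section Integrality.
Variables (F : fieldType) (Zp : {pred F}) (L : fieldExtType F).
Hypothesis Zp_subring : subring_closed Zp.
#[local] HB.instance Definition _ := GRing.isSubringClosed.Build F Zp Zp_subring.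

Lemma ring_of_integersP (x : L) : ring_of_integers Zp x ->
  exists d (b : nat -> F), (forall k, b k \in Zp) /\
    \sum_(k < d) b k *: x ^+ k + x ^+ d = 0.
Proof.
move=> [q [q_monic qZ qx]]; exists (size q).-1, (fun k => q`_k); split => //.
have : horner_alg x q = 0 by apply/eqP.
have sq : size q = (size q).-1.+1 by rewrite prednK // lt0n size_poly_eq0 monic_neq0.
by rewrite horner_algE sq big_ord_recr /= -/(lead_coef q) (monicP q_monic) scale1r.
Qed.

Lemma det_polyOver n (B : 'M[{poly F}]_n) :
  B \is a mxOver (polyOver Zp) -> \det B \is a polyOver Zp.
Proof.
move/mxOverP=> BZ; apply: rpred_sum => s _.
rewrite rpredM ?rpredX ?rpredN ?rpred1 //.
by apply: rpred_prod => i _; apply: BZ.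
Qed.

(* The characteristic polynomial of M is monic over Zp and kills every eigenvalue. *)
Lemma eigenvalue_integral m (M : 'M[F]_m.+1) (v : 'cV[L]_m.+1) (x : L) :
  M \is a mxOver Zp -> v ord0 0 = 1 -> map_mx (in_alg L) M *m v = x *: v ->
  ring_of_integers Zp x.
Proof.
move=> /mxOverP MZ v0 Mv.
set A := x%:M - map_mx (in_alg L) M.
have Av : A *m v = 0 by rewrite mulmxBl mul_scalar_mx Mv subrr.
have detA : \det A = 0.
  have := congr1 (mulmx (\adj A)) Av.
  rewrite mulmxA mul_adj_mx mulmx0 mul_scalar_mx => /matrixP /(_ ord0 0).
  by rewrite !mxE v0 mulr1.
exists (char_poly M); split; first exact: char_poly_monic.
  apply/polyOverP; apply: det_polyOver; apply/mxOverP => i j.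
  rewrite !mxE rpredB ?polyOverC //.
  by apply: rpredMn; apply: polyOverX.
rewrite /root; change (horner_alg x (char_poly M) == 0).
rewrite /char_poly -det_map_mx.
suff -> : map_mx (horner_alg x) (char_poly_mx M) = A by rewrite detA.
apply/matrixP => i j; rewrite !mxE rmorphB rmorphMn /=.
by rewrite horner_algX horner_algC.
Qed.

(* theta is an eigenvalue of a cyclic permutation matrix, with eigenvector (theta^i)_i. *)
Lemma integral_horner_unity_root m (theta : L) (f : {poly F}) :
  theta ^+ m.+1 = 1 -> f \is a polyOver Zp -> ring_of_integers Zp (horner_alg theta f).
Proof.
move=> theta_m fZ.
pose P : 'M[F]_m.+1 := \matrix_(i, j) (j == ordS i)%:R.
pose v : 'cV[L]_m.+1 := \col_i theta ^+ i.
have Pv : map_mx (in_alg L) P *m v = theta *: v.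
  apply/matrixP => i k; rewrite !mxE (bigD1 (ordS i)) //= big1 => [|j /negbTE ji].
    by rewrite !mxE eqxx rmorph1 mul1r addr0 expr_mod // exprS.
  by rewrite !mxE ji rmorph0 mul0r.
have Mv (h : {poly F}) :
    map_mx (in_alg L) (horner_mx P h) *m v = horner_alg theta h *: v.
  elim/poly_ind: h => [|h a IH].
    rewrite !rmorph0 scale0r; apply/matrixP => i j; rewrite !mxE big1 // => k _.
    by rewrite !mxE mul0r.
  rewrite rmorphD rmorphM /= horner_mx_X horner_mx_C map_mxD map_mxM mulmxDl.
  rewrite -mulmxA Pv -scalemxAr IH map_scalar_mx mul_scalar_mx rmorphD rmorphM /=.
  by rewrite horner_algX horner_algC scalerA scalerDl mulrC.
apply: (eigenvalue_integral (v := v)) (Mv f); last by rewrite mxE expr0.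
rewrite -[f]coefK poly_def rmorph_sum /=; apply: rpred_sum => i _.
rewrite linearZ /= rmorphXn /= horner_mx_X mxOverZ ?(polyOverP fZ) //.
apply: rpredX; apply/mxOverP => a b; rewrite mxE.
by case: (_ == _); rewrite ?rpred0 ?rpred1.
Qed.

End Integrality.

Section PadicIntegers.
Variables (p : nat) (F : fieldType) (Zp : {pred F}).
Hypothesis hZp : is_padic_integers p Zp.

Lemma Zp_subring : subring_closed Zp.
Proof.
by case: hZp => -[Zp1 ZpBM _ _ _] _; split=> // x y xZ yZ; case: (ZpBM x y xZ yZ).
Qed.
#[local] HB.instance Definition _ := GRing.isSubringClosed.Build F Zp Zp_subring.

Lemma Zp_or_inv x : x \in Zp \/ x^-1 \in Zp.
Proof. by case: hZp => -[_ _ h _ _] _; apply: h. Qed.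

Lemma natp_Zp : p%:R \in Zp. Proof. by case: hZp => -[_ _ _ []]. Qed.

Lemma invp_notin_Zp : (p%:R : F)^-1 \notin Zp. Proof. by case: hZp => -[_ _ _ []]. Qed.

Lemma natp_neq0 : p%:R != 0 :> F.
Proof. by apply: contraNneq invp_notin_Zp => ->; rewrite invr0 rpred0. Qed.

Lemma Zp_invr_ndivp x : x \in Zp -> x / p%:R \notin Zp -> x^-1 \in Zp.
Proof.
by case: hZp => -[_ _ _ _ Zp_divp] _ xZ; apply: contraNT; apply: Zp_divp.
Qed.

Lemma Zp_invr_addp u z : u != 0 -> u \in Zp -> u^-1 \in Zp -> z \in Zp ->
  p%:R * z + u != 0 /\ (p%:R * z + u)^-1 \in Zp.
Proof.
move=> u0 uZ uiZ zZ.
have ndivp : (p%:R * z + u) / p%:R \notin Zp.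
  apply: contra invp_notin_Zp => /rpredB /(_ zZ).
  rewrite mulrDl mulrAC divff ?natp_neq0 // mul1r addrAC subrr add0r => /(rpredM uiZ).
  by rewrite mulKf.
split; first by apply: contraNneq ndivp => ->; rewrite mul0r rpred0.
by apply: Zp_invr_ndivp; rewrite // rpredD ?rpredM ?natp_Zp.
Qed.

Lemma exists_pexpM_Zp a : exists N, p%:R ^+ N * a \in Zp.
Proof.
have [aZ|aiZ] := Zp_or_inv a; first by exists 0%N; rewrite mul1r.
have [->|a0] := eqVneq a 0; first by exists 0%N; rewrite mulr0 rpred0.
have exP : exists n, a^-1 / p%:R ^+ n.+1 \notin Zp.
  apply: NNPP => all_div; case: hZp => _ [_ Zp_sep _].
  suff /Zp_sep/eqP : forall n, a^-1 / p%:R ^+ n \in Zp by rewrite invr_eq0 (negbTE a0).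
  case=> [|n]; first by rewrite divr1.
  by apply: NNPP => nZ; apply: all_div; exists n; apply/negP.
case: (ex_minnP exP) => n ndiv n_min.
have bZ : a^-1 / p%:R ^+ n \in Zp.
  case: n ndiv n_min => [|n] _ n_min; first by rewrite divr1.
  by apply/negPn/negP => /n_min; rewrite ltnn.
exists n; have := Zp_invr_ndivp bZ; rewrite invfM !invrK [a * _]mulrC; apply.
by rewrite -mulrA -invfM -exprSr.
Qed.

Lemma exists_pexp_scale_polyOver (g : {poly F}) :
  exists N, p%:R ^+ N *: g \is a polyOver Zp.
Proof.
have [N gN] : exists N, forall i, (i < size g)%N -> p%:R ^+ N * g`_i \in Zp.
  elim: (size g) => [|n [N gN]]; first by exists 0%N.
  have [M gM] := exists_pexpM_Zp g`_n.
  exists (N + M)%N => i; rewrite ltnS leq_eqVlt => /predU1P [->|lt_in].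
    by rewrite exprD -mulrA rpredM ?rpredX ?natp_Zp.
  by rewrite addnC exprD -mulrA rpredM ?rpredX ?natp_Zp ?gN.
exists N; apply/polyOverP => i; rewrite coefZ.
by case: (ltnP i (size g)) => [/gN //|le_gi]; rewrite nth_default ?mulr0 ?rpred0.
Qed.

Lemma integral_scalar_Zp (L : fieldExtType F) a :
  ring_of_integers Zp (a%:A : L) -> a \in Zp.
Proof.
move=> /ring_of_integersP [d [b [bZ root_a]]].
have root_aF : \sum_(k < d) b k * a ^+ k + a ^+ d = 0.
  apply: (fmorph_inj (in_alg L)); rewrite rmorph0 -root_a rmorphD rmorph_sum rmorphXn /=.
  by congr (_ + _); apply: eq_bigr => k _; rewrite -in_algE rmorphM rmorphXn /= mulr_algl.
have [//|aiZ] := Zp_or_inv a; have [->|a0] := eqVneq a 0; first by rewrite rpred0.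
rewrite {1}(monic_root_invE root_aF (mulfV a0)) rpredN rpred_sum // => k _.
by rewrite rpredM ?rpredX ?bZ.
Qed.

End PadicIntegers.

Section ScaledRestriction.
Variables (F : fieldType) (Zp : {pred F}) (L : fieldExtType F) (theta : L).
Variables (g : L -> L -> L) (g_alt : alt_bilinear g).

Lemma alt_bilinearZ a x y : g (a *: x) (a *: y) = a ^+ 2 *: g x y.
Proof.
case: g_alt => gl gr _.
have g0l z : g 0 z = 0.
  have := gl 1 0 0 z; rewrite scaler0 addr0 scale1r => g0z.
  by apply/esym/(addrI (g 0 z)); rewrite addr0 -g0z.
have g0r z : g z 0 = 0.
  have := gr 1 z 0 0; rewrite scaler0 addr0 scale1r => gz0.
  by apply/esym/(addrI (g z 0)); rewrite addr0 -gz0.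
by rewrite -[a *: x]addr0 gl g0l addr0 -[a *: y]addr0 gr g0r addr0 scalerA expr2.
Qed.

Lemma restr_in_Hhat_scale i j a : a != 0 ->
    (forall x : L, ideal_pow Zp j x <-> ideal_pow Zp i (a *: x)) ->
    (forall z : L, ideal_pow Zp (2 * j + 1) z <-> ideal_pow Zp (2 * i + 1) (a ^+ 2 *: z)) ->
  restr_in_Hhat Zp theta i g -> restr_in_Hhat Zp theta j g.
Proof.
move=> a_neq0 scale1 scale2 [g_into g_equiv g_onto].
have a2_neq0 : a ^+ 2 != 0 by rewrite expf_neq0.
split=> [x y /scale1 ax /scale1 ay | k x y /scale1 ax /scale1 ay | z /scale2 /g_onto [s [sP gs]]].
- by apply/scale2; rewrite -alt_bilinearZ; apply: g_into.
- apply: (scalerI a2_neq0).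
  by rewrite -alt_bilinearZ !scalerAr g_equiv // alt_bilinearZ.
exists [seq (a^-1 *: ab.1, a^-1 *: ab.2) | ab <- s]; split.
  move=> _ /mapP [ab /sP [ab1 ab2] ->] /=.
  by split; apply/scale1; rewrite scalerKV.
apply: (scalerI a2_neq0); rewrite gs big_map scaler_sumr; apply: eq_bigr => ab _.
by rewrite alt_bilinearZ exprVn scalerKV.
Qed.

End ScaledRestriction.

Section CyclotomicIntegers.
Variables (p : nat) (F : fieldType) (Zp : {pred F}) (L : fieldExtType F) (theta : L).
Hypotheses (p_prime : prime p) (hZp : is_padic_integers p Zp).
Hypothesis theta_prim : p.-primitive_root theta.
Hypothesis theta_gen : <<1%VS; theta>>%VS = fullv.
#[local] HB.instance Definition _ := GRing.isSubringClosed.Build F Zp (Zp_subring hZp).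

Definition Zp_theta (x : L) : Prop :=
  exists2 f : {poly F}, f \is a polyOver Zp & x = horner_alg theta f.

Lemma Zp_theta_alg a : a \in Zp -> Zp_theta a%:A.
Proof. by exists a%:P; rewrite ?polyOverC ?horner_algC. Qed.

Lemma Zp_theta0 : Zp_theta 0. Proof. by rewrite -(scale0r 1); apply/Zp_theta_alg/rpred0. Qed.
Lemma Zp_theta1 : Zp_theta 1. Proof. by rewrite -(scale1r 1); apply/Zp_theta_alg/rpred1. Qed.
Lemma Zp_theta_id : Zp_theta theta.
Proof. by exists 'X; rewrite ?polyOverX ?horner_algX. Qed.

Lemma Zp_thetaB x y : Zp_theta x -> Zp_theta y -> Zp_theta (x - y).
Proof. by move=> [f fZ ->] [g gZ ->]; exists (f - g); rewrite ?rpredB ?rmorphB. Qed.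
Lemma Zp_thetaD x y : Zp_theta x -> Zp_theta y -> Zp_theta (x + y).
Proof. by move=> [f fZ ->] [g gZ ->]; exists (f + g); rewrite ?rpredD ?rmorphD. Qed.
Lemma Zp_thetaM x y : Zp_theta x -> Zp_theta y -> Zp_theta (x * y).
Proof. by move=> [f fZ ->] [g gZ ->]; exists (f * g); rewrite ?rpredM ?rmorphM. Qed.
Lemma Zp_thetaN x : Zp_theta x -> Zp_theta (- x).
Proof. by rewrite -sub0r; apply: Zp_thetaB Zp_theta0. Qed.
Lemma Zp_thetaX x n : Zp_theta x -> Zp_theta (x ^+ n).
Proof.
by move=> Zx; elim: n => [|n IHn]; [rewrite expr0; apply: Zp_theta1 | rewrite exprS; apply: Zp_thetaM].
Qed.
Lemma Zp_thetaZ a x : a \in Zp -> Zp_theta x -> Zp_theta (a *: x).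
Proof. by move=> aZ Zx; rewrite -mulr_algl; exact: Zp_thetaM (Zp_theta_alg aZ) Zx. Qed.

Lemma Zp_theta_sum (I : Type) (r : seq I) (P : pred I) (E : I -> L) :
  (forall i, P i -> Zp_theta (E i)) -> Zp_theta (\sum_(i <- r | P i) E i).
Proof. exact: (big_ind _ Zp_theta0 Zp_thetaD). Qed.
Lemma Zp_theta_prod (I : Type) (r : seq I) (P : pred I) (E : I -> L) :
  (forall i, P i -> Zp_theta (E i)) -> Zp_theta (\prod_(i <- r | P i) E i).
Proof. exact: (big_ind _ Zp_theta1 Zp_thetaM). Qed.

Definition pi : L := 1 - theta.

Definition pi_mult n (z : L) : Prop := exists2 r, Zp_theta r & z = pi ^+ n * r.

Lemma Zp_theta_pi : Zp_theta pi. Proof. exact: Zp_thetaB Zp_theta1 Zp_theta_id. Qed.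

Lemma pi_neq0 : pi != 0.
Proof.
rewrite subr_eq0 eq_sym; apply: contraTneq (prime_gt1 p_prime) => theta1.
by have := prim_order_dvd theta_prim 1; rewrite expr1 theta1 eqxx dvdn1 => /eqP ->.
Qed.

Lemma prod_one_sub_thetaX : \prod_(1 <= k < p) (1 - theta ^+ k) = p%:R.
Proof.
have p_gt1 := prime_gt1 p_prime.
have cyclo : \prod_(1 <= k < p) ('X - (theta ^+ k)%:P) = \sum_(k < p) 'X^k.
  have := factor_Xn_sub_1 theta_prim.
  rewrite big_ltn ?(ltnW p_gt1) // expr0 subrX1.
  exact: (mulfI (negbT (polyXsubC_eq0 1))).
have := congr1 (horner^~ 1) cyclo; rewrite /= horner_prod horner_sum.
under eq_bigr do rewrite hornerXsubC.
move=> ->; under eq_bigr do rewrite hornerXn expr1n.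
by rewrite sumr_const card_ord.
Qed.

Lemma pi_eq_one_sub_thetaX_mul k : (0 < k < p)%N ->
  exists2 u, Zp_theta u & pi = (1 - theta ^+ k) * u.
Proof.
case/andP=> k_gt0 lt_kp.
have thetak_prim : p.-primitive_root (theta ^+ k).
  by rewrite prim_root_exp_coprime // coprime_sym prime_coprime // gtnNdvd.
have [i theta_i] := prim_rootP thetak_prim (prim_expr_order theta_prim).
exists (\sum_(j < i) (theta ^+ k) ^+ j); last by rewrite /pi {1}theta_i subr1X.
by apply: Zp_theta_sum => j _; do 2!apply: Zp_thetaX; apply: Zp_theta_id.
Qed.

Lemma pi_exp_prod n : (n < p)%N ->
  exists2 U, Zp_theta U & pi ^+ n = \prod_(1 <= k < n.+1) (1 - theta ^+ k) * U.
Proof.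
elim: n => [|n IHn] lt_np; first by exists 1; [apply: Zp_theta1 | rewrite big_geq ?mul1r].
have [U ZU piU] := IHn (ltnW lt_np).
have [u Zu pi_u] := pi_eq_one_sub_thetaX_mul (k := n.+1) lt_np.
exists (U * u); first exact: Zp_thetaM.
by rewrite exprS piU {1}pi_u [in RHS]big_nat_recr //=; ring.
Qed.

Lemma pi_exp_eq_natp_mul : exists2 U, Zp_theta U & pi ^+ p.-1 = p%:R * U.
Proof.
have [|U ZU ->] := pi_exp_prod (n := p.-1); first by rewrite ltn_predL prime_gt0.
by exists U; rewrite // prednK ?prime_gt0 // prod_one_sub_thetaX.
Qed.

Lemma natp_eq_pi_exp_mul : exists2 W, Zp_theta W & p%:R = pi ^+ p.-1 * W.
Proof.
exists (\prod_(1 <= k < p) \sum_(i < k) theta ^+ i).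
  by apply: Zp_theta_prod => k _; apply: Zp_theta_sum => i _; apply: Zp_thetaX Zp_theta_id.
rewrite -prod_one_sub_thetaX (eq_bigr _ (fun k _ => subr1X theta k)) big_split /=.
by rewrite prodr_const_nat subn1.
Qed.

Lemma Zp_theta_integral x : Zp_theta x -> ring_of_integers Zp x.
Proof.
move=> [f fZ ->]; apply: (integral_horner_unity_root (Zp_subring hZp) (m := p.-1)) fZ.
by rewrite prednK ?prime_gt0 // prim_expr_order.
Qed.

Lemma natp_algE : ((p%:R : F)%:A : L) = p%:R.
Proof. by rewrite -in_algE rmorph_nat. Qed.

Lemma pi_mul_neq1 r : Zp_theta r -> pi * r <> 1.
Proof.
move=> Zr pir; have [U ZU piU] := pi_exp_eq_natp_mul.
have p_r : (p%:R : F)%:A * (U * r ^+ p.-1) = 1.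
  by rewrite natp_algE mulrA -piU -exprMn pir expr1n.
have p_inv : ((p%:R : F)^-1)%:A = U * r ^+ p.-1.
  by rewrite -[LHS]mulr1 -{2}p_r !mulr_algl scalerA mulVf ?(natp_neq0 hZp) // scale1r.
apply/negP: (invp_notin_Zp hZp); apply/negPn; apply: (integral_scalar_Zp hZp (L := L)).
by rewrite p_inv; apply: Zp_theta_integral; exact: Zp_thetaM ZU (Zp_thetaX _ Zr).
Qed.

(* The integral equation of t over Zp, rescaled by p^d, becomes an equation for
   Y = 1 + p t whose constant term is congruent to (-1)^d modulo p. *)
Lemma one_add_p_annihilator t : Zp_theta t ->
  exists d, exists2 z, z \in Zp & exists2 R, Zp_theta R &
    ((p%:R : F) * z + (-1) ^+ d)%:A + (1 + (p%:R : F) *: t) * R = 0.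
Proof.
move=> Zt; have [d [b [bZ root_t]]] := ring_of_integersP (Zp_theta_integral Zt).
set c : F := p%:R; set Y := 1 + c *: t.
have cZ : c \in Zp := natp_Zp hZp.
have ZY : Zp_theta Y := Zp_thetaD Zp_theta1 (Zp_thetaZ cZ Zt).
pose s k := \sum_(i < k) (Y - 1) ^+ (k.-1 - i) * (-1) ^+ i.
have Zs k : Zp_theta (s k).
  apply: Zp_theta_sum => i _; apply: Zp_thetaM; apply: Zp_thetaX.
    exact: Zp_thetaB ZY Zp_theta1.
  exact: Zp_thetaN Zp_theta1.
have ct_exp k : (c *: t) ^+ k = (-1) ^+ k + Y * s k.
  have -> : c *: t = Y - 1 by rewrite /Y addrAC subrr add0r.
  by rewrite -[LHS](subrK ((-1) ^+ k)) subrXX opprK subrK addrC.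
pose beta k : F := b k * c ^+ (d - k).
pose e : F := \sum_(k < d) beta k * (-1) ^+ k + (-1) ^+ d.
pose R := \sum_(k < d) beta k *: s k + s d.
have YR : e%:A + Y * R = 0.
  rewrite -[RHS](scaler0 _ (c ^+ d)) -{1}root_t scalerDr scaler_sumr -exprZn ct_exp.
  have scaled (k : 'I_d) :
      c ^+ d *: (b k *: t ^+ k) = in_alg L (beta k * (-1) ^+ k) + Y * (beta k *: s k).
    rewrite rmorphM rmorphXn rmorphN1 /= mulr_algl -scalerAr -scalerDr.
    rewrite -ct_exp exprZn !scalerA; congr (_ *: _).
    by rewrite /beta -mulrA -exprD subnK ?(ltnW (ltn_ord k)) // mulrC.
  rewrite (eq_bigr _ (fun k _ => scaled k)) big_split /= /e /R -in_algE rmorphD rmorph_sum /=.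
  by rewrite mulrDr mulr_sumr addrACA -[((-1) ^+ d)%:A]in_algE rmorphXn rmorphN1.
pose z : F := \sum_(k < d) b k * c ^+ (d - k).-1 * (-1) ^+ k.
have eE : e = c * z + (-1) ^+ d.
  rewrite /e /z mulr_sumr; congr (_ + _); apply: eq_bigr => k _.
  have ck : c ^+ (d - k) = c * c ^+ (d - k).-1 by rewrite -exprS prednK // subn_gt0.
  by rewrite /beta ck; ring.
exists d, z; first by apply: rpred_sum => k _; rewrite !rpredM ?rpredX ?rpredN ?rpred1.
exists R; last by rewrite -eE.
apply: Zp_thetaD (Zs d); apply: Zp_theta_sum => k _.
by apply: Zp_thetaZ (Zs k); rewrite rpredM ?rpredX.
Qed.

Lemma one_add_p_unit t : Zp_theta t ->
  exists2 y, Zp_theta y & (1 + (p%:R : F) *: t) * y = 1.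
Proof.
move=> /one_add_p_annihilator [d [z zZ [R ZR]]].
set e := _ * z + _ => YR.
have [e_neq0 e_invZ] : e != 0 /\ e^-1 \in Zp.
  apply: (Zp_invr_addp hZp) => //; rewrite ?signr_eq0 ?rpredX ?rpredN ?rpred1 //.
  by rewrite -exprVn invrN1 rpredX ?rpredN ?rpred1.
exists (- (e^-1 *: R)); first exact: Zp_thetaN (Zp_thetaZ e_invZ ZR).
have YRe : (1 + (p%:R : F) *: t) * R = - e%:A by apply/eqP; rewrite -addr_eq0 addrC YR.
by rewrite mulrN -scalerAr YRe scalerN opprK scalerA mulVf // scale1r.
Qed.

Lemma one_add_pi_mul_expp s : Zp_theta s ->
  exists2 t, Zp_theta t & (1 + pi * s) ^+ p = 1 + (p%:R : F) *: t.
Proof.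
move=> Zs; have [U ZU piU] := pi_exp_eq_natp_mul.
set a := pi * s; have Za : Zp_theta a := Zp_thetaM Zp_theta_pi Zs.
pose T i := if (i.+1 < p)%N then a ^+ i.+1 *+ ('C(p, i.+1) %/ p) else pi * U * s ^+ p.
exists (\sum_(i < p) T i).
  apply: Zp_theta_sum => i _; rewrite /T; case: ifP => _.
    by rewrite -scaler_nat; apply: Zp_thetaZ (Zp_thetaX _ Za); rewrite rpred_nat.
  exact: Zp_thetaM (Zp_thetaM Zp_theta_pi ZU) (Zp_thetaX _ Zs).
rewrite addrC exprD1n big_ord_recl /= expr0 bin0 mulr1n; congr (_ + _).
rewrite scaler_sumr; apply: eq_bigr => i _; rewrite /T /bump /=.
case: ifP => lt_ip.
  have /divnK {1}<- := prime_dvd_bin p_prime (lt_ip : 0 < i.+1 < p)%N.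
  by rewrite mulrnA scaler_nat.
have ip : i.+1 = p by apply/eqP; rewrite eqn_leq ltn_ord leqNgt lt_ip.
rewrite add1n ip binn mulr1n /a exprMn -{1}ip exprS.
have -> : (i : nat) = p.-1 by rewrite -[in RHS]ip.
by rewrite piU -mulr_algl natp_algE; ring.
Qed.

Lemma Zp_theta_modpi f : f \is a polyOver Zp ->
  exists2 s, Zp_theta s & horner_alg theta f = (\sum_(i < size f) f`_i)%:A + pi * s.
Proof.
move=> fZ; exists (- \sum_(i < size f) f`_i *: \sum_(j < i) theta ^+ j).
  apply: Zp_thetaN; apply: Zp_theta_sum => i _; apply: Zp_thetaZ; first exact: (polyOverP fZ).
  by apply: Zp_theta_sum => j _; apply: Zp_thetaX Zp_theta_id.
rewrite horner_algE scaler_suml mulrN mulr_sumr -sumrB; apply: eq_bigr => i _.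
rewrite -scalerAr -scalerBr; congr (_ *: _).
by rewrite /pi -subr1X opprB addrCA subrr addr0.
Qed.

(* Write u = c0 (1 + pi s) with c0 a unit of Zp; then (1 + pi s)^p = 1 + p t is a unit. *)
Lemma Zp_theta_unit u : Zp_theta u -> ~ pi_mult 1%N u -> exists2 y, Zp_theta y & u * y = 1.
Proof.
move=> [f fZ ->] npi; have [s' Zs' u_mod] := Zp_theta_modpi fZ.
set c0 := \sum_(i < size f) f`_i in u_mod.
have c0Z : c0 \in Zp by apply: rpred_sum => i _; exact: (polyOverP fZ).
have c0_ndivp : c0 / p%:R \notin Zp.
  apply/negP => c0p; apply: npi; have [W ZW pW] := natp_eq_pi_exp_mul.
  have p1 : p.-1 = (p.-1).-1.+1 by rewrite prednK // -ltnS prednK ?prime_gt0 ?prime_gt1.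
  exists ((c0 / p%:R) *: (pi ^+ (p.-1).-1 * W) + s').
    exact: Zp_thetaD (Zp_thetaZ c0p (Zp_thetaM (Zp_thetaX _ Zp_theta_pi) ZW)) Zs'.
  rewrite u_mod expr1 mulrDr -scalerAr mulrA -exprS -p1 -pW -natp_algE.
  by rewrite -[c0 in LHS](divfK (natp_neq0 hZp)) -scalerA.
have c0_invZ := Zp_invr_ndivp hZp c0Z c0_ndivp.
have c0_neq0 : c0 != 0 by apply: contraNneq c0_ndivp => ->; rewrite mul0r rpred0.
pose s := c0^-1 *: s'; have Zs : Zp_theta s by apply: Zp_thetaZ.
have [t Zt pi_s_p] := one_add_pi_mul_expp Zs.
have [z Zz tz] := one_add_p_unit Zt.
have Z1pis : Zp_theta (1 + pi * s) := Zp_thetaD Zp_theta1 (Zp_thetaM Zp_theta_pi Zs).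
exists (c0^-1 *: ((1 + pi * s) ^+ p.-1 * z)).
  exact: Zp_thetaZ c0_invZ (Zp_thetaM (Zp_thetaX _ Z1pis) Zz).
have u_fact : c0%:A + pi * s' = c0%:A * (1 + pi * s).
  by rewrite mulrDr mulr1 /s -scalerAr mulr_algl scalerA divff // scale1r.
rewrite u_mod u_fact -scalerAr -mulrA mulr_algl scalerA mulVf // scale1r.
by rewrite mulrA -exprS prednK ?prime_gt0 // pi_s_p.
Qed.

Lemma exists_pexp_scale_Zp_theta x : exists N, Zp_theta ((p%:R : F) ^+ N *: x).
Proof.
have : x \in <<1%VS; theta>>%VS by rewrite theta_gen memvf.
case/Fadjoin_polyP => g /polyOver1P [g' ->] ->.
have [N g'Z] := exists_pexp_scale_polyOver hZp g'.
by exists N, ((p%:R : F) ^+ N *: g'); rewrite // linearZ /= mulr_algl.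
Qed.

Lemma integral_inv_not_pi_mult x w :
  ring_of_integers Zp x -> x * w = 1 -> ~ pi_mult 1%N w.
Proof.
move=> /ring_of_integersP [d [b [bZ root_x]]] xw [r Zr w_pi].
have root_x' : \sum_(k < d) (b k)%:A * x ^+ k + x ^+ d = 0.
  by rewrite -[RHS]root_x; congr (_ + _); apply: eq_bigr => k _; rewrite mulr_algl.
have Zw : Zp_theta w by rewrite w_pi; exact: Zp_thetaM Zp_theta_pi Zr.
apply: (pi_mul_neq1 (r := r * x)).
  have x_poly : x = - \sum_(k < d) (b k)%:A * w ^+ (d.-1 - k).
    exact: (@monic_root_invE L (fun k => (b k)%:A) d x w root_x' xw).
  apply: (Zp_thetaM Zr); rewrite x_poly.
  apply: Zp_thetaN; apply: Zp_theta_sum => k _.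
  exact: Zp_thetaM (Zp_theta_alg (bZ k)) (Zp_thetaX _ Zw).
by rewrite mulrA -(expr1 pi) -w_pi mulrC xw.
Qed.

(* Some pi^m x lies in Zp[theta]; if pi^(m+1) x did and were not divisible by pi, it would
   be a unit of Zp[theta], making the inverse of the integral element x divisible by pi. *)
Lemma integral_Zp_theta x : ring_of_integers Zp x -> Zp_theta x.
Proof.
move=> xO.
suff pi_div m : Zp_theta (pi ^+ m * x) -> Zp_theta x.
  have [N ZN] := exists_pexp_scale_Zp_theta x; have [U ZU piU] := pi_exp_eq_natp_mul.
  apply: (pi_div (p.-1 * N)%N).
  have -> : pi ^+ (p.-1 * N) * x = U ^+ N * ((p%:R : F) ^+ N *: x).
    rewrite exprM piU -natp_algE -[in RHS]mulr_algl -!in_algE rmorphXn /=.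
    by rewrite exprMn [_ ^+ N * _]mulrC -mulrA.
  exact: Zp_thetaM (Zp_thetaX _ ZU) ZN.
elim: m => [|m IHm] Zmx; first by rewrite expr0 mul1r in Zmx.
have [[r Zr pi_r]|npi] := classic (pi_mult 1%N (pi ^+ m.+1 * x)).
  apply: IHm; suff -> : pi ^+ m * x = r by [].
  by apply: (mulfI pi_neq0); rewrite mulrA -exprS pi_r expr1.
have [v Zv vx] := Zp_theta_unit Zmx npi.
case: (integral_inv_not_pi_mult (w := pi ^+ m.+1 * v) xO).
  by rewrite mulrA [x * _]mulrC vx.
exists (pi ^+ m * v); first exact: Zp_thetaM (Zp_thetaX _ Zp_theta_pi) Zv.
by rewrite expr1 mulrA -exprS.
Qed.

Lemma max_idealE x : max_ideal Zp x <-> pi_mult 1%N x.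
Proof.
split=> [[/integral_Zp_theta Zx x_nunit] | [r Zr ->]].
  apply: NNPP => npi; have [y Zy xy] := Zp_theta_unit Zx npi.
  by apply: x_nunit; exists y; split=> //; apply: Zp_theta_integral.
split; first exact: Zp_theta_integral (Zp_thetaM (Zp_thetaX _ Zp_theta_pi) Zr).
move=> [y [/integral_Zp_theta Zy]]; rewrite expr1 -mulrA.
exact: pi_mul_neq1 (Zp_thetaM Zr Zy).
Qed.

Lemma ideal_powE n x : ideal_pow Zp n x <-> pi_mult n x.
Proof.
elim: n x => [|n IHn] x /=.
  split=> [/integral_Zp_theta Zx | [r Zr ->]]; first by exists x; rewrite ?expr0 ?mul1r.
  by rewrite expr0 mul1r; apply: Zp_theta_integral.
split=> [[s [sP ->]] | [r Zr ->]].
  elim: s sP => [|ab s IHs] sP.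
    by exists 0; [apply: Zp_theta0 | rewrite big_nil mulr0].
  have [r Zr sum_s] : pi_mult n.+1 (\sum_(ab <- s) ab.1 * ab.2).
    by apply: IHs => ab' ab's; apply: sP; rewrite inE ab's orbT.
  have [/max_idealE [r1 Zr1 ab1] /IHn [r2 Zr2 ab2]] := sP ab (mem_head ab s).
  exists (r1 * r2 + r); first exact: Zp_thetaD (Zp_thetaM Zr1 Zr2) Zr.
  by rewrite big_cons sum_s ab1 ab2 expr1 exprS mulrDr; ring.
exists [:: (pi, pi ^+ n * r)]; split; last by rewrite big_seq1 exprS mulrA.
move=> ab; rewrite mem_seq1 => /eqP -> /=; split; last by apply/IHn; exists r.
by apply/max_idealE; exists 1; [apply: Zp_theta1 | rewrite expr1 mulr1].
Qed.

Lemma pi_mult_shift k z : pi_mult (k + p.-1) z <-> pi_mult k ((p%:R : F)^-1 *: z).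
Proof.
have [U ZU piU] := pi_exp_eq_natp_mul; have [W ZW pW] := natp_eq_pi_exp_mul.
have p_neq0 : p%:R != 0 :> L.
  by rewrite -natp_algE scaler_eq0 oner_eq0 orbF (natp_neq0 hZp).
have invpE y : (p%:R : F)^-1 *: y = (p%:R : L)^-1 * y.
  by rewrite -mulr_algl -in_algE fmorphV rmorph_nat.
rewrite invpE; split=> [[r Zr ->] | [r Zr pz]].
  by exists (U * r); [apply: Zp_thetaM | rewrite exprD piU; field].
exists (W * r); first exact: Zp_thetaM.
by rewrite -[z](mulVKf p_neq0) pz exprD pW; ring.
Qed.

Lemma ideal_pow_shift m k (z : L) :
  ideal_pow Zp (k + m * p.-1) z <-> ideal_pow Zp k ((p%:R : F)^-1 ^+ m *: z).
Proof.
elim: m k z => [|m IHm] k z; first by rewrite mul0n addn0 expr0 scale1r.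
by rewrite mulSnr addnA ideal_powE pi_mult_shift -ideal_powE IHm scalerA -exprSr.
Qed.

Lemma restr_in_Hhat_shift (g : L -> L -> L) k m : alt_bilinear g ->
  restr_in_Hhat Zp theta (k + m * p.-1) g <-> restr_in_Hhat Zp theta k g.
Proof.
move=> g_alt; set a : F := (p%:R : F)^-1 ^+ m.
have a_neq0 : a != 0 by rewrite expf_neq0 // invr_eq0 (natp_neq0 hZp).
have shift2 (z : L) : ideal_pow Zp (2 * (k + m * p.-1) + 1) z <->
                ideal_pow Zp (2 * k + 1) (a ^+ 2 *: z).
  have -> : (2 * (k + m * p.-1) + 1 = 2 * k + 1 + m * 2 * p.-1)%N by ring.
  by rewrite ideal_pow_shift /a -exprM.
split; last by apply: (restr_in_Hhat_scale g_alt a_neq0) => // x; apply: ideal_pow_shift.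
apply: (restr_in_Hhat_scale g_alt (a := a^-1)); first by rewrite invr_eq0.
  by move=> x; rewrite ideal_pow_shift (scalerKV a_neq0).
by move=> z; rewrite shift2 exprVn scalerKV // expf_neq0.
Qed.

End CyclotomicIntegers.

Theorem lemma2p2 (p : nat) (F : fieldType) (Zp : {pred F})
  (L : fieldExtType F) (theta : L)
  (p_prime : prime p) (p_odd : odd p)
  (hZp : is_padic_integers p Zp)
  (htheta : p.-primitive_root theta)
  (hK : <<1%VS; theta>>%VS = fullv)
  (i : nat) (g : L -> L -> L)
  (hg : alt_bilinear g)
  (hgi : restr_in_Hhat Zp theta i g)
  (j : nat) (hij : j = i %[mod p.-1]) :
  restr_in_Hhat Zp theta j g.
Proof.
have shift k m := restr_in_Hhat_shift p_prime hZp htheta hK k m hg.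
rewrite (divn_eq j p.-1) addnC shift hij -(shift _ (i %/ p.-1)%N) addnC -divn_eq.
exact: hgi.
Qed.
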